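(* Let $\gamma$ be an ordinal of $\mathrm{OT}$ and $A$ an $\mathcal L_{\mathrm R}^{<\gamma}$-sentence with $\mathsf{RR}^{+}_{<\gamma}\vdash A$. Then $\langle{\perp\!\!\!\perp},<\gamma\rangle\models A$ for every pole $\perp\!\!\!\perp$.
   Context: Arithmetic: $\mathcal{L}$ is the language of $\mathsf{PA}$ ($\to,\forall,=$, constant $0$, function symbols for all primitive recursive functions); $\langle x,y\rangle$ primitive recursive pairing with projections $(\cdot)_0,(\cdot)_1$; $x\cdot y\simeq z$ is $\exists w(\mathrm T_1(x,y,w)\wedge(w)_0=z)$ (Kleene T-predicate): the $x$-th partial recursive function on $y$ halts with output $z$; $\mathrm{Eq}(y,z)$: $y,z$ code closed $\mathcal L$-terms of equal value. Fixed Gödel numbering; $\ulcorner A(\dot x)\urcorner$ codes $A$ with the numeral of $x$ substituted. $\mathrm{OT}$ is a standard primitive recursive notation system for predicative ordinals; $\alpha,\beta,\gamma,\delta$ range over notations. $\mathcal L_{\mathrm R}^{<\gamma}$ is $\mathcal L$ plus unary $x\in{\perp\!\!\!\perp}$ and binary $x\,F_\beta\,y$, $x\,T_\beta\,y$ for $\beta<\gamma$; $\mathcal L_{\perp\!\!\!\perp}=\mathcal L\cup\{\in{\perp\!\!\!\perp}\}$; $\mathrm{Sent}^{<\beta}_{\mathrm R}(x)$: ''$x$ codes an $\mathcal L_{\mathrm R}^{<\beta}$-sentence''. Explicit refutation/realisation formulas, by recursion on $A$: $s\in\|P\|:=P\to s\in{\perp\!\!\!\perp}$ ($P$ atomic of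 $\mathcal L_{\perp\!\!\!\perp}$); $s\in\|t\,F_\beta\,u\|:=s\,F_\beta\,(t\,\dot\in\|u\|)$; $s\in\|t\,T_\beta\,u\|:=s\,F_\beta\,(t\,\dot\in|u|)$; $s\in\|A\to B\|:=(s)_0\in|A|\wedge(s)_1\in\|B\|$; $s\in\|\forall xA(x)\|:=(s)_1\in\|A((s)_0)\|$; $s\in|A|:=\forall a(a\in\|A\|\to\langle s,a\rangle\in{\perp\!\!\!\perp})$; $x\,\dot\in\|y\|$, $x\,\dot\in|y|$ are primitive recursive function symbols with $\mathsf{PA}\vdash x\,\dot\in\|\ulcorner A\urcorner\|=\ulcorner\dot x\in\|A\|\urcorner$, $x\,\dot\in|\ulcorner A\urcorner|=\ulcorner\dot x\in|A|\urcorner$ for sentences $A$, with non-sentence output when $y$ is not a sentence code. $\ulcorner\dot b\,F_\alpha\ulcorner A\urcorner\urcorner$ denotes the code of $\bar b\,F_\alpha\,\overline{\ulcorner A\urcorner}$ and $\ulcorner\dot b\in\|A\|\urcorner$ denotes $b\,\dot\in\|\ulcorner A\urcorner\|$ (similarly for $T_\alpha$, $|\cdot|$). $\mathsf{RR}_{<\gamma}$ is $\mathsf{PA}$ in $\mathcal L_{\mathrm R}^{<\gamma}$ plus, for all $\alpha<\beta<\gamma$: (RR1) $\mathrm T_1(a,b,c)\to((c)_0\in{\perp\!\!\!\perp}\to\langle a,b\rangle\in{\perp\!\!\!\perp})$; (RR2) $\forall\ulcorner A\urcorner\in\mathrm{Sent}^{<\beta}_{\mathrm R}.\ a\,T_\beta\ulcorner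 A\urcorner\leftrightarrow\forall b(b\,F_\beta\ulcorner A\urcorner\to\langle a,b\rangle\in{\perp\!\!\!\perp})$; (RR3) $\forall\ulcorner s\urcorner,\ulcorner t\urcorner\forall\ulcorner A_x\urcorner\in\mathrm{Sent}^{<\beta}_{\mathrm R}.\ \mathrm{Eq}(\ulcorner s\urcorner,\ulcorner t\urcorner)\to(a\,F_\beta\ulcorner A(s)\urcorner\to a\,F_\beta\ulcorner A(t)\urcorner)$; (RR4) $a\,F_\beta\ulcorner P(\dot{\vec x})\urcorner\leftrightarrow(P(\vec x)\to a\in{\perp\!\!\!\perp})$ for atomic $P$ of $\mathcal L_{\perp\!\!\!\perp}$; (RR5) $\forall\ulcorner A\urcorner,\ulcorner B\urcorner\in\mathrm{Sent}^{<\beta}_{\mathrm R}.\ a\,F_\beta\ulcorner A\to B\urcorner\leftrightarrow((a)_0\,T_\beta\ulcorner A\urcorner\wedge(a)_1\,F_\beta\ulcorner B\urcorner)$; (RR6) $\forall\ulcorner A_x\urcorner\in\mathrm{Sent}^{<\beta}_{\mathrm R}.\ a\,F_\beta\ulcorner\forall xA\urcorner\leftrightarrow(a)_1\,F_\beta\ulcorner A((\dot a)_0)\urcorner$; (RR7) $\forall\ulcorner A\urcorner\in\mathrm{Sent}^{<\alpha}_{\mathrm R}.\ a\,F_\beta\ulcorner\dot b\,F_\alpha\ulcorner A\urcorner\urcorner\leftrightarrow a\in\|b\,F_\alpha\ulcorner A\urcorner\|$; (RR8) same with $T_\alpha$; (RR9) $\forall\delta<\beta\,\forall\ulcorner A\urcorner\in\mathrm{Sent}^{<\delta}_{\mathrm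 R}.\ a\,F_\beta\ulcorner\dot b\,F_\delta\ulcorner A\urcorner\urcorner\leftrightarrow a\,F_\beta\ulcorner\dot b\in\|A\|\urcorner$; (RR10) $\forall\delta<\beta\,\forall\ulcorner A\urcorner\in\mathrm{Sent}^{<\delta}_{\mathrm R}.\ a\,F_\beta\ulcorner\dot b\,T_\delta\ulcorner A\urcorner\urcorner\leftrightarrow a\,F_\beta\ulcorner\dot b\in|A|\urcorner$. $\mathsf{RR}^{+}_{<\gamma}$ adds the rule: from $t\,T_\beta\ulcorner A\urcorner$ infer $A$ ($t$ closed term, $A$ an $\mathcal L$-sentence, $\beta<\gamma$). Models: a pole is $\perp\!\!\!\perp\subseteq\mathbb N$ with ($e\cdot m\simeq n$ and $n\in\perp\!\!\!\perp$) $\Rightarrow\langle e,m\rangle\in\perp\!\!\!\perp$. For $\mathcal L_{\mathrm R}^{<\gamma}$-sentences define $\|A\|^{<\gamma}_{\perp\!\!\!\perp}$ inductively: $n\in\|s=t\|$ iff ($s=t$ true in $\mathbb N$ implies $n\in\perp\!\!\!\perp$); $n\in\|m\in{\perp\!\!\!\perp}\|$ iff ($m\in\perp\!\!\!\perp$ implies $n\in\perp\!\!\!\perp$); $n\in\|m\,F_\beta\,l\|$ iff $l=\ulcorner A\urcorner$ for some $\mathcal L_{\mathrm R}^{<\beta}$-sentence $A$ and $n\in\|\bar m\in\|A\|\|$; $n\in\|m\,T_\beta\,l\|$ iff $l=\ulcorner A\urcorner$ for some $\mathcal L_{\mathrm R}^{<\beta}$-sentence $A$ and $n\in\|\bar m\in|A|\|$;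 $\|A\to B\|$, $\|\forall xA\|$ as in the explicit clauses; $|A|^{<\gamma}_{\perp\!\!\!\perp}=\{n:\forall m\in\|A\|\ \langle n,m\rangle\in\perp\!\!\!\perp\}$. Let $\mathbb F^\beta=\{(n,\ulcorner A\urcorner):A\in\mathrm{Sent}^{<\beta}_{\mathrm R},n\in\|A\|^{<\gamma}_{\perp\!\!\!\perp}\}$, $\mathbb T^\beta=\{(n,\ulcorner A\urcorner):A\in\mathrm{Sent}^{<\beta}_{\mathrm R},n\in|A|^{<\gamma}_{\perp\!\!\!\perp}\}$. $\langle{\perp\!\!\!\perp},<\gamma\rangle$ denotes the $\mathcal L_{\mathrm R}^{<\gamma}$-structure $\langle\mathbb N,\perp\!\!\!\perp,(\mathbb F^\beta)_{\beta<\gamma},(\mathbb T^\beta)_{\beta<\gamma}\rangle$. *)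

From Stdlib Require Import List Arith Wellfounded.
Import ListNotations.

(* Arguments are passed as lists; missing arguments default to 0.      *)
Inductive prf : Type :=
| PZero
| PSucc
| PProj (i : nat)
| PComp (f : prf) (gs : list prf)
| PRec (g h : prf).

Fixpoint prf_eval (f : prf) (xs : list nat) {struct f} : nat :=
  match f with
  | PZero => 0
  | PSucc => S (hd 0 xs)
  | PProj i => nth i xs 0
  | PComp g hs =>
      prf_eval g ((fix evs (l : list prf) : list nat :=
                     match l with
                     | [] => []
                     | h :: l' => prf_eval h xs :: evs l'
                     end) hs)
  | PRec g h =>
      let ys := tl xs in
      (fix r (n : nat) : nat :=
         match n with
         | 0 => prf_eval g ys
         | S n' => prf_eval h (n' :: r n' :: ys)
         end) (hd 0 xs)
  end.

(* Terms of L (de Bruijn variables), formulas of L_R (all indices).     *)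
Inductive term : Type :=
| tvar (n : nat)
| tzero
| tapp (f : prf) (ts : list term).

Fixpoint teval (env : nat -> nat) (t : term) : nat :=
  match t with
  | tvar n => env n
  | tzero => 0
  | tapp f ts =>
      prf_eval f ((fix evs (l : list term) : list nat :=
                     match l with
                     | [] => []
                     | u :: l' => teval env u :: evs l'
                     end) ts)
  end.

Fixpoint tsubst (sg : nat -> term) (t : term) : term :=
  match t with
  | tvar n => sg n
  | tzero => tzero
  | tapp f ts =>
      tapp f ((fix sbs (l : list term) : list term :=
                 match l with
                 | [] => []
                 | u :: l' => tsubst sg u :: sbs l'
                 end) ts)
  end.

Fixpoint tbound (k : nat) (t : term) : Prop :=
  match t with
  | tvar n => n < k
  | tzero => True
  | tapp _ ts =>
      (fix all (l : list term) : Prop :=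
         match l with
         | [] => True
         | u :: l' => tbound k u /\ all l'
         end) ts
  end.

Definition tS (t : term) : term := tapp PSucc [t].

Fixpoint numeral (n : nat) : term :=
  match n with
  | 0 => tzero
  | S n' => tS (numeral n')
  end.

Definition tlift (t : term) : term := tsubst (fun n => tvar (S n)) t.

Definition scons {X : Type} (x : X) (f : nat -> X) : nat -> X :=
  fun n => match n with 0 => x | S n' => f n' end.

Definition up (sg : nat -> term) : nat -> term := scons (tvar 0) (fun n => tlift (sg n)).

(* x F_b y  is  fF b x y ;  x T_b y  is  fT b x y ;  fPole t is  t \in pole *)
Inductive form : Type :=
| fEq (s t : term)
| fPole (t : term)
| fF (b : nat) (s t : term)
| fT (b : nat) (s t : term)
| fImp (A B : form)
| fAll (A : form).

Fixpoint fsubst (sg : nat -> term) (A : form) : form :=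
  match A with
  | fEq s t => fEq (tsubst sg s) (tsubst sg t)
  | fPole t => fPole (tsubst sg t)
  | fF b s t => fF b (tsubst sg s) (tsubst sg t)
  | fT b s t => fT b (tsubst sg s) (tsubst sg t)
  | fImp A B => fImp (fsubst sg A) (fsubst sg B)
  | fAll A => fAll (fsubst (up sg) A)
  end.

(* A[t/x] for the variable 0 (other free variables are lowered) *)
Definition subst0 (A : form) (t : term) : form := fsubst (scons t tvar) A.
Definition flift (A : form) : form := fsubst (fun n => tvar (S n)) A.

Fixpoint fbound (k : nat) (A : form) : Prop :=
  match A with
  | fEq s t => tbound k s /\ tbound k t
  | fPole t => tbound k t
  | fF _ s t | fT _ s t => tbound k s /\ tbound k t
  | fImp A B => fbound k A /\ fbound k B
  | fAll A => fbound (S k) A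
  end.

Definition closed (A : form) : Prop := fbound 0 A.

Fixpoint idx_ok (P : nat -> Prop) (A : form) : Prop :=
  match A with
  | fEq _ _ | fPole _ => True
  | fF b _ _ | fT b _ _ => P b
  | fImp A B => idx_ok P A /\ idx_ok P B
  | fAll A => idx_ok P A
  end.

Fixpoint isL (A : form) : Prop :=
  match A with
  | fEq _ _ => True
  | fPole _ | fF _ _ _ | fT _ _ _ => False
  | fImp A B => isL A /\ isL B
  | fAll A => isL A
  end.

Definition atomic_Lpole (A : form) : Prop :=
  match A with fEq _ _ | fPole _ => True | _ => False end.

Definition ffalse : form := fEq tzero (tS tzero).
Definition fNot (A : form) : form := fImp A ffalse.
Definition fAnd (A B : form) : form := fNot (fImp A (fNot B)).
Definition fIff (A B : form) : form := fAnd (fImp A B) (fImp B A).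
Definition frel (c : prf) (ts : list term) : form := fEq (tapp c ts) tzero.

Fixpoint tsat (env : nat -> nat) (A : form) : Prop :=
  match A with
  | fEq s t => teval env s = teval env t
  | fPole _ | fF _ _ _ | fT _ _ _ => False
  | fImp A B => tsat env A -> tsat env B
  | fAll A => forall n, tsat (scons n env) A
  end.

Record Codes : Type := {
  code : form -> nat;
  tcode : term -> nat;
  c_pair : prf;
  c_p0 : prf;
  c_p1 : prf;
  c_T1 : prf;                    (* Kleene T_1(x,y,w) iff c_T1 [x;y;w] = 0 *)
  c_ot : prf;                    (* x in OT iff c_ot [x] = 0 *)
  c_lt : prf;                    (* x < y in OT iff c_lt [x;y] = 0 *)
  c_num : prf;
  c_imp : prf;
  c_all : prf;
  c_subst0 : prf;
  c_mkF : prf;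
  c_mkT : prf;
  c_inF : prf;
  c_inT : prf;
  c_sent : prf;                  (* Sent^{<b}_R(x) iff c_sent [b;x] = 0 *)
  c_sent1 : prf;
  eqf : form                     (* the L-formula Eq(y,z), y = var 0, z = var 1 *)
}.

Section WithCodes.
Variable C : Codes.

Definition ltR (a b : nat) : Prop := prf_eval (c_lt C) [a; b] = 0.
Definition inOT (a : nat) : Prop := prf_eval (c_ot C) [a] = 0.
Definition inLang (b : nat) (A : form) : Prop := idx_ok (fun a => ltR a b) A.

Definition tpair (s t : term) : term := tapp (c_pair C) [s; t].
Definition tp0 (s : term) : term := tapp (c_p0 C) [s].
Definition tp1 (s : term) : term := tapp (c_p1 C) [s].
Definition npair (a b : nat) : nat := prf_eval (c_pair C) [a; b].
Definition np0 (a : nat) : nat := prf_eval (c_p0 C) [a].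
Definition np1 (a : nat) : nat := prf_eval (c_p1 C) [a].

(* The explicit formula  s \in ||A||  (with A under the substitution sg),
   by recursion on A:
     s \in ||P||        := P -> s \in pole   (P atomic of L_pole)
     s \in ||t F_b u||  := s F_b (t \dot\in ||u||)
     s \in ||t T_b u||  := s F_b (t \dot\in |u|)
     s \in ||A -> B||   := (s)_0 \in |A| /\ (s)_1 \in ||B||
     s \in ||forall x A|| := (s)_1 \in ||A((s)_0)||
     s \in |A|          := forall a (a \in ||A|| -> <s,a> \in pole)        *)
Fixpoint realF_s (sg : nat -> term) (s : term) (A : form) : form :=
  match A with
  | fEq t u => fImp (fEq (tsubst sg t) (tsubst sg u)) (fPole s)
  | fPole t => fImp (fPole (tsubst sg t)) (fPole s)
  | fF b t u => fF b s (tapp (c_inF C) [tsubst sg t; tsubst sg u])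
  | fT b t u => fF b s (tapp (c_inT C) [tsubst sg t; tsubst sg u])
  | fImp A B =>
      fAnd (fAll (fImp (realF_s (fun n => tlift (sg n)) (tvar 0) A)
                       (fPole (tpair (tlift (tp0 s)) (tvar 0)))))
           (realF_s sg (tp1 s) B)
  | fAll A => realF_s (scons (tp0 s) sg) (tp1 s) A
  end.

Definition realF (s : term) (A : form) : form := realF_s tvar s A.
Definition realT (s : term) (A : form) : form :=
  fAll (fImp (realF (tvar 0) (flift A)) (fPole (tpair (tlift s) (tvar 0)))).

(* The axioms of RR_{<gamma}.  Axioms are open formulas (implicitly     *)
(* universally closed via the generalisation rule).                    *)
Definition v (n : nat) : term := tvar n.
Definition tnum (t : term) : term := tapp (c_num C) [t].
Definition tsub0 (c s : term) : term := tapp (c_subst0 C) [c; s].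

(* code term of P(\dot x_0, ..., \dot x_{k-1}) *)
Fixpoint dotq_aux (c : term) (i k : nat) : term :=
  match k with
  | 0 => c
  | S k' => dotq_aux (tsub0 c (tnum (v i))) (S i) k'
  end.
Definition dotq (P : form) (k : nat) : term := dotq_aux (numeral (code C P)) 0 k.

Definition eq12 : form :=
  fsubst (fun n => match n with 0 => v 1 | 1 => v 2 | _ => v n end) (eqf C).

Inductive RRAx (g : nat) : form -> Prop :=
| rr1 :
    RRAx g (fImp (frel (c_T1 C) [v 0; v 1; v 2])
                 (fImp (fPole (tp0 (v 2))) (fPole (tpair (v 0) (v 1)))))
| rr2 b : ltR b g ->
    RRAx g (fImp (frel (c_sent C) [numeral b; v 1])
                 (fIff (fT b (v 0) (v 1))
                       (fAll (fImp (fF b (v 0) (v 2)) (fPole (tpair (v 1) (v 0)))))))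
| rr3 b : ltR b g ->
    RRAx g (fImp (frel (c_sent1 C) [numeral b; v 3])
              (fImp eq12
                 (fImp (fF b (v 0) (tsub0 (v 3) (v 1)))
                       (fF b (v 0) (tsub0 (v 3) (v 2))))))
| rr4 b P k : ltR b g -> atomic_Lpole P -> fbound k P ->
    RRAx g (fIff (fF b (v k) (dotq P k)) (fImp P (fPole (v k))))
| rr5 b : ltR b g ->
    RRAx g (fImp (frel (c_sent C) [numeral b; v 1])
              (fImp (frel (c_sent C) [numeral b; v 2])
                 (fIff (fF b (v 0) (tapp (c_imp C) [v 1; v 2]))
                       (fAnd (fT b (tp0 (v 0)) (v 1)) (fF b (tp1 (v 0)) (v 2))))))
| rr6 b : ltR b g ->
    RRAx g (fImp (frel (c_sent1 C) [numeral b; v 1])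
              (fIff (fF b (v 0) (tapp (c_all C) [v 1]))
                    (fF b (tp1 (v 0)) (tsub0 (v 1) (tnum (tp0 (v 0)))))))
| rr7 a b : ltR a b -> ltR b g ->
    RRAx g (fImp (frel (c_sent C) [numeral a; v 2])
              (fIff (fF b (v 0) (tapp (c_mkF C) [numeral a; tnum (v 1); tnum (v 2)]))
                    (realF (v 0) (fF a (v 1) (v 2)))))
| rr8 a b : ltR a b -> ltR b g ->
    RRAx g (fImp (frel (c_sent C) [numeral a; v 2])
              (fIff (fF b (v 0) (tapp (c_mkT C) [numeral a; tnum (v 1); tnum (v 2)]))
                    (realF (v 0) (fT a (v 1) (v 2)))))
| rr9 b : ltR b g ->
    RRAx g (fImp (frel (c_lt C) [v 3; numeral b])
              (fImp (frel (c_sent C) [v 3; v 2])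
                 (fIff (fF b (v 0) (tapp (c_mkF C) [v 3; tnum (v 1); tnum (v 2)]))
                       (fF b (v 0) (tapp (c_inF C) [v 1; v 2])))))
| rr10 b : ltR b g ->
    RRAx g (fImp (frel (c_lt C) [v 3; numeral b])
              (fImp (frel (c_sent C) [v 3; v 2])
                 (fIff (fF b (v 0) (tapp (c_mkT C) [v 3; tnum (v 1); tnum (v 2)]))
                       (fF b (v 0) (tapp (c_inT C) [v 1; v 2]))))).

End WithCodes.

Inductive LogAx : form -> Prop :=
| ax_K A B : LogAx (fImp A (fImp B A))
| ax_S A B D : LogAx (fImp (fImp A (fImp B D)) (fImp (fImp A B) (fImp A D)))
| ax_DN A : LogAx (fImp (fNot (fNot A)) A)
| ax_inst A t : LogAx (fImp (fAll A) (subst0 A t))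
| ax_allimp A B : LogAx (fImp (fAll (fImp (flift A) B)) (fImp A (fAll B)))
| ax_refl t : LogAx (fEq t t)
| ax_leib A s t : LogAx (fImp (fEq s t) (fImp (subst0 A s) (subst0 A t))).

Inductive PAAx : form -> Prop :=
| pa_succ0 t : PAAx (fNot (fEq (tS t) tzero))
| pa_succinj s t : PAAx (fImp (fEq (tS s) (tS t)) (fEq s t))
| pa_zero ts : PAAx (fEq (tapp PZero ts) tzero)
| pa_succ_nil : PAAx (fEq (tapp PSucc []) (tS tzero))
| pa_succ_cons t ts : PAAx (fEq (tapp PSucc (t :: ts)) (tS t))
| pa_proj i ts : PAAx (fEq (tapp (PProj i) ts) (nth i ts tzero))
| pa_comp f gs ts : PAAx (fEq (tapp (PComp f gs) ts) (tapp f (map (fun g => tapp g ts) gs)))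
| pa_rec_nil g h : PAAx (fEq (tapp (PRec g h) []) (tapp (PRec g h) [tzero]))
| pa_rec0 g h ts : PAAx (fEq (tapp (PRec g h) (tzero :: ts)) (tapp g ts))
| pa_recS g h t ts :
    PAAx (fEq (tapp (PRec g h) (tS t :: ts))
              (tapp h (t :: tapp (PRec g h) (t :: ts) :: ts)))
| pa_ind A :
    PAAx (fImp (subst0 A tzero)
               (fImp (fAll (fImp A (fsubst (scons (tS (tvar 0)) (fun n => tvar (S n))) A)))
                     (fAll A))).

Inductive Prov (C : Codes) (g : nat) : form -> Prop :=
| pr_ax A : (LogAx A \/ PAAx A \/ RRAx C g A) -> inLang C g A -> Prov C g A
| pr_mp A B : Prov C g (fImp A B) -> Prov C g A -> Prov C g B
| pr_gen A : Prov C g A -> Prov C g (fAll A)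
| pr_plus b t A : ltR C b g -> tbound 0 t -> closed A -> isL A ->
    Prov C g (fT b t (numeral (code C A))) -> Prov C g A.

Record CodesOK (C : Codes) : Prop := {
  code_inj : forall A B, code C A = code C B -> A = B;
  tcode_inj : forall s t, tcode C s = tcode C t -> s = t;
  pair_p0 : forall a b, np0 C (npair C a b) = a;
  pair_p1 : forall a b, np1 C (npair C a b) = b;
  lt_wf : well_founded (ltR C);
  lt_trans : forall a b d, ltR C a b -> ltR C b d -> ltR C a d;
  lt_ot : forall a b, ltR C a b -> inOT C a /\ inOT C b;
  num_ok : forall n, prf_eval (c_num C) [n] = tcode C (numeral n);
  imp_ok : forall A B, prf_eval (c_imp C) [code C A; code C B] = code C (fImp A B);
  all_ok : forall A, prf_eval (c_all C) [code C A] = code C (fAll A);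
  subst0_ok : forall A t, tbound 0 t ->
    prf_eval (c_subst0 C) [code C A; tcode C t] = code C (subst0 A t);
  mkF_ok : forall a t u, prf_eval (c_mkF C) [a; tcode C t; tcode C u] = code C (fF a t u);
  mkT_ok : forall a t u, prf_eval (c_mkT C) [a; tcode C t; tcode C u] = code C (fT a t u);
  inF_ok : forall m A, closed A ->
    prf_eval (c_inF C) [m; code C A] = code C (realF C (numeral m) A);
  inT_ok : forall m A, closed A ->
    prf_eval (c_inT C) [m; code C A] = code C (realT C (numeral m) A);
  inF_bad : forall m y, (forall A, closed A -> code C A <> y) ->
    forall B, closed B -> code C B <> prf_eval (c_inF C) [m; y];
  inT_bad : forall m y, (forall A, closed A -> code C A <> y) ->
    forall B, closed B -> code C B <> prf_eval (c_inT C) [m; y];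
  sent_ok : forall b x, prf_eval (c_sent C) [b; x] = 0 <->
    exists A, closed A /\ inLang C b A /\ code C A = x;
  sent1_ok : forall b x, prf_eval (c_sent1 C) [b; x] = 0 <->
    exists A, fbound 1 A /\ inLang C b A /\ code C A = x;
  eqf_L : isL (eqf C) /\ fbound 2 (eqf C);
  eqf_ok : forall env, tsat env (eqf C) <->
    exists s t, tbound 0 s /\ tbound 0 t /\ tcode C s = env 0 /\ tcode C t = env 1 /\
                teval (fun _ => 0) s = teval (fun _ => 0) t
}.

Definition kleene_app (C : Codes) (e m n : nat) : Prop :=
  exists w, prf_eval (c_T1 C) [e; m; w] = 0 /\ np0 C w = n.

Definition is_pole (C : Codes) (pole : nat -> Prop) : Prop :=
  forall e m n, kleene_app C e m n -> pole n -> pole (npair C e m).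

Section Model.
Variables (C : Codes) (H : CodesOK C) (pole : nat -> Prop).

(* One step of the definition of ||A||^{<b}: given the refutation sets for
   all a < b, define ||A|| for formulas A (free variables read from env).
   n in ||m F_a l|| iff l is the code of an L^{<a}-sentence A and
   n in ||m-bar \in ||A|| ||  (the latter an L^{<a}-sentence). *)
Definition PhiStep (b : nat)
    (rec : forall a, ltR C a b -> form -> (nat -> nat) -> nat -> Prop)
    : form -> (nat -> nat) -> nat -> Prop :=
  fix phi (A : form) (env : nat -> nat) (n : nat) {struct A} : Prop :=
    match A with
    | fEq t u => teval env t = teval env u -> pole n
    | fPole t => pole (teval env t) -> pole n
    | fF a t u =>
        match Nat.eq_dec (prf_eval (c_lt C) [a; b]) 0 with
        | left h => exists B, closed B /\ inLang C a B /\ code C B = teval env u /\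
                      rec a h (realF C (numeral (teval env t)) B) (fun _ => 0) n
        | right _ => False
        end
    | fT a t u =>
        match Nat.eq_dec (prf_eval (c_lt C) [a; b]) 0 with
        | left h => exists B, closed B /\ inLang C a B /\ code C B = teval env u /\
                      rec a h (realT C (numeral (teval env t)) B) (fun _ => 0) n
        | right _ => False
        end
    | fImp A B =>
        (forall m, phi A env m -> pole (npair C (np0 C n) m)) /\ phi B env (np1 C n)
    | fAll A => phi A (scons (np0 C n) env) (np1 C n)
    end.

Definition Phi : nat -> form -> (nat -> nat) -> nat -> Prop :=
  Fix (lt_wf C H) (fun _ => form -> (nat -> nat) -> nat -> Prop) PhiStep.

Definition refut (g : nat) (A : form) (n : nat) : Prop := Phi g A (fun _ => 0) n.
Definition realiz (g : nat) (A : form) (n : nat) : Prop :=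
  forall m, refut g A m -> pole (npair C n m).

Fixpoint sat (g : nat) (env : nat -> nat) (A : form) : Prop :=
  match A with
  | fEq s t => teval env s = teval env t
  | fPole t => pole (teval env t)
  | fF b s t => ltR C b g /\ exists B, closed B /\ inLang C b B /\
                  code C B = teval env t /\ refut g B (teval env s)
  | fT b s t => ltR C b g /\ exists B, closed B /\ inLang C b B /\
                  code C B = teval env t /\ realiz g B (teval env s)
  | fImp A B => sat g env A -> sat g env B
  | fAll A => forall n, sat g (scons n env) A
  end.

End Model.

(* The refutation sets are
   defined by well-founded recursion on the level, and a sentence of L^{<a}_R
   has the same refutations at every level above a.  With this, each axiom
   RR1-RR10 is an unfolding of the clauses defining ||.||, once its code terms
   are evaluated to the codes of the intended sentences (codes are injective).
   For the rule of RR^+, take the empty pole: there an L-sentence has a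
   refutation exactly when it is false, so a realiser of A forces A to be true,
   and the truth of an L-sentence does not depend on the pole. *)

From Stdlib Require Import List Arith Lia Classical FunctionalExtensionality.
Import ListNotations.

Section TermNestedInd.
Variables (P : term -> Prop) (P_var : forall n, P (tvar n)) (P_zero : P tzero)
  (P_app : forall f ts, Forall P ts -> P (tapp f ts)).

Fixpoint term_nested_ind (t : term) : P t :=
  match t with
  | tvar n => P_var n
  | tzero => P_zero
  | tapp f ts =>
      P_app f ts ((fix all (l : list term) : Forall P l :=
                     match l with
                     | [] => Forall_nil P
                     | u :: l' => Forall_cons u (term_nested_ind u) (all l')
                     end) ts)
  end.
End TermNestedInd.

Lemma teval_tapp env f ts : teval env (tapp f ts) = prf_eval f (map (teval env) ts).
Proof. simpl; f_equal; induction ts; simpl; congruence. Qed.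

Lemma tsubst_tapp sg f ts : tsubst sg (tapp f ts) = tapp f (map (tsubst sg) ts).
Proof. simpl; f_equal; induction ts; simpl; congruence. Qed.

Lemma tbound_tapp k f ts : tbound k (tapp f ts) <-> Forall (tbound k) ts.
Proof.
  simpl; induction ts as [|u ts IH]; simpl.
  - split; auto.
  - rewrite IH, Forall_cons_iff. reflexivity.
Qed.

Lemma prf_eval_PComp f gs xs :
  prf_eval (PComp f gs) xs = prf_eval f (map (fun g => prf_eval g xs) gs).
Proof. simpl; f_equal; induction gs; simpl; congruence. Qed.

Lemma teval_tsubst env sg t : teval env (tsubst sg t) = teval (fun i => teval env (sg i)) t.
Proof.
  induction t as [| |f ts IH] using term_nested_ind; auto.
  rewrite tsubst_tapp, !teval_tapp, map_map. f_equal.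
  apply map_ext_in. intros u Hu. rewrite Forall_forall in IH. auto.
Qed.

Lemma teval_ext_bound k e e' t :
  tbound k t -> (forall i, i < k -> e i = e' i) -> teval e t = teval e' t.
Proof.
  induction t as [n| |f ts IH] using term_nested_ind; intros Hb He; [simpl in *; auto|auto|].
  rewrite !teval_tapp. f_equal. apply tbound_tapp in Hb.
  apply map_ext_in. intros u Hu. rewrite Forall_forall in IH, Hb. auto.
Qed.

Lemma tbound_tsubst k m sg t :
  tbound k t -> (forall i, i < k -> tbound m (sg i)) -> tbound m (tsubst sg t).
Proof.
  induction t as [n| |f ts IH] using term_nested_ind; intros Hb Hsg; [simpl in *; auto|exact I|].
  rewrite tsubst_tapp, tbound_tapp, Forall_map. apply tbound_tapp in Hb.
  rewrite Forall_forall in *. auto.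
Qed.

Lemma tbound_tlift k t : tbound k t -> tbound (S k) (tlift t).
Proof. intros Hb. eapply tbound_tsubst; eauto. intros i Hi; simpl; lia. Qed.

Lemma tbound_numeral k n : tbound k (numeral n).
Proof. induction n; simpl; auto. Qed.

Lemma teval_numeral env n : teval env (numeral n) = n.
Proof. induction n; simpl; auto. Qed.

Lemma teval_up n env sg :
  (fun i => teval (scons n env) (up sg i)) = scons n (fun i => teval env (sg i)).
Proof.
  apply functional_extensionality; intros [|i]; simpl; auto.
  unfold tlift. rewrite teval_tsubst. reflexivity.
Qed.

Lemma teval_scons_tvar env t : (fun i => teval env (scons t tvar i)) = scons (teval env t) env.
Proof. apply functional_extensionality; intros [|i]; reflexivity. Qed.

Lemma fbound_fsubst A : forall k m sg,
  fbound k A -> (forall i, i < k -> tbound m (sg i)) -> fbound m (fsubst sg A).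
Proof.
  induction A; intros k m sg Hb Hsg; simpl in *;
    try (destruct Hb; split; eauto using tbound_tsubst);
    eauto using tbound_tsubst.
  eapply IHA; eauto. intros [|i] Hi; simpl; [lia|].
  apply tbound_tlift, Hsg. lia.
Qed.

Lemma closed_subst0 A t : fbound 1 A -> tbound 0 t -> closed (subst0 A t).
Proof. intros HA Ht. eapply fbound_fsubst; eauto. intros [|i] Hi; simpl; auto; lia. Qed.

Lemma tsat_ext_bound A : forall k e e',
  fbound k A -> (forall i, i < k -> e i = e' i) -> (tsat e A <-> tsat e' A).
Proof.
  induction A; intros k e e' Hb He; simpl in *; try tauto.
  - destruct Hb. rewrite (teval_ext_bound k e e' s), (teval_ext_bound k e e' t); tauto.
  - destruct Hb. rewrite (IHA1 k e e'), (IHA2 k e e'); tauto.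
  - assert (Hn : forall n, tsat (scons n e) A <-> tsat (scons n e') A).
    { intros n. apply (IHA (S k)); auto. intros [|i] Hi; simpl; auto. apply He. lia. }
    split; intros Ha n; apply Hn; auto.
Qed.

Lemma idx_ok_mono (P Q : nat -> Prop) A :
  (forall x, P x -> Q x) -> idx_ok P A -> idx_ok Q A.
Proof. induction A; simpl; intuition. Qed.

Lemma idx_ok_fsubst P A : forall sg, idx_ok P (fsubst sg A) <-> idx_ok P A.
Proof. induction A; intros; simpl; try tauto; [rewrite IHA1, IHA2; tauto | apply IHA]. Qed.

Section Realisation.
Variable C : Codes.

Lemma idx_ok_realF_s P A : forall sg s, idx_ok P A -> idx_ok P (realF_s C sg s A).
Proof. induction A; intros sg s0 HA; simpl in *; intuition. Qed.

Lemma idx_ok_realT P A s : idx_ok P A -> idx_ok P (realT C s A).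
Proof.
  intros HA. simpl. split; auto.
  apply idx_ok_realF_s, idx_ok_fsubst, HA.
Qed.

Lemma fbound_realF_s A : forall j k sg s, fbound j A ->
  (forall i, i < j -> tbound k (sg i)) -> tbound k s -> fbound k (realF_s C sg s A).
Proof.
  induction A; intros j k sg s0 Hb Hsg Hs; simpl in *;
    repeat split; try tauto; try (eapply tbound_tsubst; eauto; tauto).
  - eapply IHA1; [apply Hb| |simpl; lia]. intros i Hi. apply tbound_tlift; auto.
  - apply tbound_tlift. exact Hs.
  - lia.
  - eapply IHA2; [apply Hb|eauto|simpl; auto].
  - eapply IHA; [eauto| |simpl; auto]. intros [|i] Hi; simpl; auto. apply Hsg. lia.
Qed.

Lemma closed_realF s A : tbound 0 s -> closed A -> closed (realF C s A).
Proof. intros Hs HA. eapply fbound_realF_s; eauto. Qed.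

Lemma closed_realT s A : tbound 0 s -> closed A -> closed (realT C s A).
Proof.
  intros Hs HA. simpl. repeat split.
  - eapply fbound_realF_s with (j := 1); [|intros i Hi; simpl; lia|simpl; lia].
    eapply fbound_fsubst; eauto. intros; lia.
  - apply tbound_tlift, Hs.
  - simpl; lia.
Qed.

End Realisation.

Section RefutationSets.
Variables (C : Codes) (H : CodesOK C) (pole : nat -> Prop).

Lemma Phi_unfold b A env n :
  Phi C H pole b A env n = PhiStep C pole b (fun a _ => Phi C H pole a) A env n.
Proof.
  unfold Phi at 1. rewrite Fix_eq; [reflexivity|].
  intros x f f' Hff'. f_equal.
  apply functional_extensionality_dep; intro y.
  apply functional_extensionality_dep; intro p. apply Hff'.
Qed.

Lemma Phi_Eq b s t env n :
  Phi C H pole b (fEq s t) env n <-> (teval env s = teval env t -> pole n).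
Proof. rewrite Phi_unfold. reflexivity. Qed.

Lemma Phi_Pole b t env n :
  Phi C H pole b (fPole t) env n <-> (pole (teval env t) -> pole n).
Proof. rewrite Phi_unfold. reflexivity. Qed.

Lemma Phi_F b a t u env n : Phi C H pole b (fF a t u) env n <->
  ltR C a b /\ exists B, closed B /\ inLang C a B /\ code C B = teval env u /\
    Phi C H pole a (realF C (numeral (teval env t)) B) (fun _ => 0) n.
Proof. rewrite Phi_unfold. simpl. unfold ltR. destruct Nat.eq_dec; intuition. Qed.

Lemma Phi_T b a t u env n : Phi C H pole b (fT a t u) env n <->
  ltR C a b /\ exists B, closed B /\ inLang C a B /\ code C B = teval env u /\
    Phi C H pole a (realT C (numeral (teval env t)) B) (fun _ => 0) n.
Proof. rewrite Phi_unfold. simpl. unfold ltR. destruct Nat.eq_dec; intuition. Qed.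

Lemma Phi_Imp b A B env n : Phi C H pole b (fImp A B) env n <->
  (forall m, Phi C H pole b A env m -> pole (npair C (np0 C n) m)) /\
  Phi C H pole b B env (np1 C n).
Proof.
  rewrite Phi_unfold. simpl. setoid_rewrite (Phi_unfold b A). rewrite (Phi_unfold b B).
  reflexivity.
Qed.

Lemma Phi_All b A env n :
  Phi C H pole b (fAll A) env n <-> Phi C H pole b A (scons (np0 C n) env) (np1 C n).
Proof. rewrite !Phi_unfold. reflexivity. Qed.

Lemma Phi_fsubst b A : forall sg env n,
  Phi C H pole b (fsubst sg A) env n <-> Phi C H pole b A (fun i => teval env (sg i)) n.
Proof.
  induction A; intros sg env n; simpl fsubst.
  - rewrite !Phi_Eq, !teval_tsubst. reflexivity.
  - rewrite !Phi_Pole, !teval_tsubst. reflexivity.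
  - rewrite !Phi_F, !teval_tsubst. reflexivity.
  - rewrite !Phi_T, !teval_tsubst. reflexivity.
  - rewrite !Phi_Imp. setoid_rewrite IHA1. rewrite IHA2. reflexivity.
  - rewrite !Phi_All, IHA, teval_up. reflexivity.
Qed.

Lemma Phi_level_irrelevant A : forall l l' env n,
  inLang C l A -> inLang C l' A ->
  (Phi C H pole l A env n <-> Phi C H pole l' A env n).
Proof.
  unfold inLang.
  induction A as [s t|t|a s t|a s t|A1 IH1 A2 IH2|A IH];
    intros l l' env n HA HA'; simpl in HA, HA'.
  - rewrite !Phi_Eq. reflexivity.
  - rewrite !Phi_Pole. reflexivity.
  - rewrite !Phi_F. tauto.
  - rewrite !Phi_T. tauto.
  - rewrite !Phi_Imp. setoid_rewrite (IH1 l l'); try tauto. rewrite (IH2 l l'); tauto.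
  - rewrite !Phi_All. apply IH; auto.
Qed.

End RefutationSets.

Lemma Phi_empty_pole_iff_false C H l A : isL A -> forall env,
  (exists n, Phi C H (fun _ => False) l A env n) <-> ~ tsat env A.
Proof.
  induction A as [s t| | | |A1 IH1 A2 IH2|A IH]; intros HL env; simpl in HL; try tauto.
  - setoid_rewrite Phi_Eq. simpl.
    split; [intros [n h]; tauto | intros h; exists 0; tauto].
  - setoid_rewrite Phi_Imp. simpl. destruct HL as [HL1 HL2].
    specialize (IH1 HL1 env). specialize (IH2 HL2 env).
    split.
    + intros [n [h1 h2]] h.
      assert (hA1 : tsat env A1).
      { apply NNPP. rewrite <- IH1. intros [m hm]. exact (h1 m hm). }
      apply IH2; eauto.
    + intros h.
      assert (hA1 : tsat env A1) by (apply NNPP; tauto).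
      assert (hA2 : exists m, Phi C H (fun _ => False) l A2 env m) by (apply IH2; tauto).
      destruct hA2 as [m hm]. exists (npair C 0 m). split.
      * intros m' hm'. apply IH1; eauto.
      * rewrite (pair_p1 C H). exact hm.
  - setoid_rewrite Phi_All. simpl. split.
    + intros [n hn] h. apply (IH HL (scons (np0 C n) env)); eauto.
    + intros h. apply not_all_ex_not in h. destruct h as [k hk].
      apply (IH HL) in hk. destruct hk as [m hm]. exists (npair C k m).
      rewrite (pair_p0 C H), (pair_p1 C H). exact hm.
Qed.

Section Satisfaction.
Variables (C : Codes) (H : CodesOK C) (pole : nat -> Prop) (g : nat).

Lemma sat_fsubst A : forall sg env,
  sat C H pole g env (fsubst sg A) <-> sat C H pole g (fun i => teval env (sg i)) A.
Proof.
  induction A as [| | | |A1 IH1 A2 IH2|A IH]; intros sg env; simpl;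
    rewrite ?teval_tsubst; try tauto.
  - rewrite IH1, IH2. tauto.
  - setoid_rewrite IH. setoid_rewrite teval_up. tauto.
Qed.

Lemma sat_subst0 A t env :
  sat C H pole g env (subst0 A t) <-> sat C H pole g (scons (teval env t) env) A.
Proof. unfold subst0. rewrite sat_fsubst, teval_scons_tvar. tauto. Qed.

Lemma sat_flift A n env : sat C H pole g (scons n env) (flift A) <-> sat C H pole g env A.
Proof. unfold flift. rewrite sat_fsubst. tauto. Qed.

Lemma sat_isL A : isL A -> forall env, sat C H pole g env A <-> tsat env A.
Proof.
  induction A as [| | | |A1 IH1 A2 IH2|A IH]; simpl; intros HL env; try tauto.
  - rewrite IH1, IH2; tauto.
  - setoid_rewrite IH; tauto.
Qed.

Lemma sat_Imp A B env :
  sat C H pole g env (fImp A B) <-> (sat C H pole g env A -> sat C H pole g env B).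
Proof. reflexivity. Qed.

Lemma sat_All A env : sat C H pole g env (fAll A) <-> forall n, sat C H pole g (scons n env) A.
Proof. reflexivity. Qed.

Lemma sat_Not A env : sat C H pole g env (fNot A) <-> ~ sat C H pole g env A.
Proof. simpl. split; [intros h hA; discriminate (h hA) | tauto]. Qed.

Lemma sat_And A B env :
  sat C H pole g env (fAnd A B) <-> sat C H pole g env A /\ sat C H pole g env B.
Proof.
  unfold fAnd. rewrite sat_Not. cbn [sat]. rewrite sat_Not.
  split; [|tauto]. intros h. split; apply NNPP; tauto.
Qed.

Lemma sat_Iff A B env :
  sat C H pole g env (fIff A B) <-> (sat C H pole g env A <-> sat C H pole g env B).
Proof. unfold fIff. rewrite sat_And. simpl. tauto. Qed.

Lemma sat_frel c ts env :
  sat C H pole g env (frel c ts) <-> prf_eval c (map (teval env) ts) = 0.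
Proof. unfold frel. cbn [sat]. rewrite teval_tapp. reflexivity. Qed.

Lemma LogAx_sound A : LogAx A -> forall env, sat C H pole g env A.
Proof.
  intros HA env; destruct HA; cbn [sat].
  - tauto.
  - tauto.
  - rewrite !sat_Not. apply NNPP.
  - rewrite sat_subst0. auto.
  - intros h HA n. apply h. rewrite sat_flift. exact HA.
  - reflexivity.
  - rewrite !sat_subst0. intros ->. tauto.
Qed.

Lemma PAAx_sound A : PAAx A -> forall env, sat C H pole g env A.
Proof.
  intros HA env; destruct HA; cbn [sat].
  - rewrite sat_Not. discriminate.
  - simpl. congruence.
  - reflexivity.
  - reflexivity.
  - reflexivity.
  - rewrite teval_tapp. apply (map_nth (teval env) ts tzero i).
  - rewrite teval_tapp, prf_eval_PComp, teval_tapp, map_map.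
    apply (f_equal (prf_eval f)), map_ext. intros f'. rewrite teval_tapp. reflexivity.
  - reflexivity.
  - rewrite !teval_tapp. reflexivity.
  - rewrite !teval_tapp. reflexivity.
  - rewrite sat_subst0. intros H0 Hstep n. induction n as [|n IH]; [exact H0|].
    specialize (Hstep n IH). rewrite sat_fsubst in Hstep.
    replace (scons (S n) env) with
      (fun i => teval (scons n env) (scons (tS (tvar 0)) (fun k => tvar (S k)) i));
      [exact Hstep|].
    apply functional_extensionality. intros [|i]; reflexivity.
Qed.

End Satisfaction.

Fixpoint subst_numerals (env : nat -> nat) (Q : form) (i k : nat) : form :=
  match k with
  | 0 => Q
  | S k' => subst_numerals env (subst0 Q (numeral (env i))) (S i) k'
  end.

Lemma closed_subst_numerals env k : forall Q i, fbound k Q -> closed (subst_numerals env Q i k).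
Proof.
  induction k as [|k IH]; intros Q i HQ; simpl; auto.
  apply IH. eapply fbound_fsubst; eauto.
  intros [|j] Hj; simpl; [apply tbound_numeral | lia].
Qed.

Lemma idx_ok_subst_numerals env P k : forall Q i,
  idx_ok P Q -> idx_ok P (subst_numerals env Q i k).
Proof. induction k as [|k IH]; intros Q i HQ; simpl; auto. apply IH, idx_ok_fsubst, HQ. Qed.

Lemma teval_dotq_aux C (H : CodesOK C) env k : forall c Q i,
  teval env c = code C Q -> teval env (dotq_aux C c i k) = code C (subst_numerals env Q i k).
Proof.
  induction k as [|k IH]; intros c Q i Hc; simpl; auto.
  apply IH. simpl. rewrite Hc, (num_ok C H), (subst0_ok C H) by apply tbound_numeral.
  reflexivity.
Qed.

Lemma Phi_subst_numerals C H pole l env k : forall Q i e n,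
  Phi C H pole l (subst_numerals env Q i k) e n <->
  Phi C H pole l Q (fun j => if j <? k then env (i + j) else e (j - k)) n.
Proof.
  induction k as [|k IH]; intros Q i e n; simpl.
  - replace (fun j => e (j - 0)) with e; [tauto|].
    apply functional_extensionality; intros j. f_equal; lia.
  - rewrite IH. unfold subst0. rewrite Phi_fsubst.
    match goal with
    |- Phi _ _ _ _ _ ?f _ <-> Phi _ _ _ _ _ ?f' _ => replace f with f'; [tauto|]
    end.
    apply functional_extensionality. intros [|j]; simpl.
    + rewrite teval_numeral. f_equal; lia.
    + change (S j <? S k) with (j <? k). destruct (j <? k); auto; f_equal; lia.
Qed.

Section RRAxioms.
Variables (C : Codes) (H : CodesOK C) (pole : nat -> Prop) (g : nat).

Lemma inLang_mono a b A : ltR C a b -> inLang C a A -> inLang C b A.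
Proof. intros hab. apply idx_ok_mono. intros x hxa. eapply (lt_trans C H); eauto. Qed.

Lemma refut_lower_level a A n : ltR C a g -> inLang C a A ->
  (Phi C H pole a A (fun _ => 0) n <-> refut C H pole g A n).
Proof. intros hag HA. apply Phi_level_irrelevant; eauto using inLang_mono. Qed.

Lemma refut_Imp A B n : refut C H pole g (fImp A B) n <->
  realiz C H pole g A (np0 C n) /\ refut C H pole g B (np1 C n).
Proof. apply Phi_Imp. Qed.

Lemma refut_subst0 A s n : refut C H pole g (subst0 A s) n <->
  Phi C H pole g A (scons (teval (fun _ => 0) s) (fun _ => 0)) n.
Proof. unfold refut, subst0. rewrite Phi_fsubst, teval_scons_tvar. reflexivity. Qed.

Lemma refut_All A n :
  refut C H pole g (fAll A) n <-> refut C H pole g (subst0 A (numeral (np0 C n))) (np1 C n).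
Proof. rewrite refut_subst0, teval_numeral. apply Phi_All. Qed.

Lemma refut_subst_numerals_atomic env P k n : atomic_Lpole P -> fbound k P ->
  (refut C H pole g (subst_numerals env P 0 k) n <-> (sat C H pole g env P -> pole n)).
Proof.
  intros HP Hk. unfold refut. rewrite Phi_subst_numerals.
  assert (He : forall j, j < k -> (if j <? k then env (0 + j) else 0) = env j).
  { intros j hj. apply Nat.ltb_lt in hj. rewrite hj. reflexivity. }
  destruct P as [s t|t| | | |]; simpl in HP, Hk; try contradiction; cbn [sat].
  - rewrite Phi_Eq. destruct Hk as [Hs Ht].
    rewrite (teval_ext_bound k _ env s), (teval_ext_bound k _ env t); auto. reflexivity.
  - rewrite Phi_Pole, (teval_ext_bound k _ env t); auto. reflexivity.
Qed.

Lemma sat_F_code b s t B env : closed B -> inLang C b B -> teval env t = code C B ->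
  (sat C H pole g env (fF b s t) <-> ltR C b g /\ refut C H pole g B (teval env s)).
Proof.
  intros HB HBl Ht. cbn [sat]. rewrite Ht. split.
  - intros [hb [B' [_ [_ [hc hr]]]]]. apply (code_inj C H) in hc. subst B'. auto.
  - intros [hb hr]. split; [exact hb|]. exists B. auto.
Qed.

Lemma sat_T_code b s t B env : closed B -> inLang C b B -> teval env t = code C B ->
  (sat C H pole g env (fT b s t) <-> ltR C b g /\ realiz C H pole g B (teval env s)).
Proof.
  intros HB HBl Ht. cbn [sat]. rewrite Ht. split.
  - intros [hb [B' [_ [_ [hc hr]]]]]. apply (code_inj C H) in hc. subst B'. auto.
  - intros [hb hr]. split; [exact hb|]. exists B. auto.
Qed.

Lemma sat_F_realF c s t m A env : ltR C c g -> closed A -> inLang C c A ->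
  teval env t = code C (realF C (numeral m) A) ->
  (sat C H pole g env (fF c s t) <-> refut C H pole g (realF C (numeral m) A) (teval env s)).
Proof.
  intros hc HA HAl Ht.
  rewrite (sat_F_code c s t (realF C (numeral m) A)); eauto using closed_realF, tbound_numeral.
  - tauto.
  - apply idx_ok_realF_s, HAl.
Qed.

Lemma sat_F_realT c s t m A env : ltR C c g -> closed A -> inLang C c A ->
  teval env t = code C (realT C (numeral m) A) ->
  (sat C H pole g env (fF c s t) <-> refut C H pole g (realT C (numeral m) A) (teval env s)).
Proof.
  intros hc HA HAl Ht.
  rewrite (sat_F_code c s t (realT C (numeral m) A)); eauto using closed_realT, tbound_numeral.
  - tauto.
  - apply idx_ok_realT, HAl.
Qed.

Lemma sat_F_nestedF a b s t m A env : ltR C a b -> ltR C b g -> closed A -> inLang C a A ->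
  teval env t = code C (fF a (numeral m) (numeral (code C A))) ->
  (sat C H pole g env (fF b s t) <-> refut C H pole g (realF C (numeral m) A) (teval env s)).
Proof.
  intros hab hbg HA HAl Ht.
  rewrite (sat_F_code b s t (fF a (numeral m) (numeral (code C A))));
    [| exact (conj (tbound_numeral _ _) (tbound_numeral _ _)) | exact hab | exact Ht].
  unfold refut at 1. rewrite Phi_F, !teval_numeral.
  assert (hag : ltR C a g) by (eapply (lt_trans C H); eauto).
  rewrite <- (refut_lower_level a) by (auto; apply idx_ok_realF_s, HAl).
  split.
  - intros [_ [_ [B [_ [_ [hc hr]]]]]]. apply (code_inj C H) in hc. subst B. exact hr.
  - intros hr. repeat split; auto. exists A. auto.
Qed.

Lemma sat_F_nestedT a b s t m A env : ltR C a b -> ltR C b g -> closed A -> inLang C a A ->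
  teval env t = code C (fT a (numeral m) (numeral (code C A))) ->
  (sat C H pole g env (fF b s t) <-> refut C H pole g (realT C (numeral m) A) (teval env s)).
Proof.
  intros hab hbg HA HAl Ht.
  rewrite (sat_F_code b s t (fT a (numeral m) (numeral (code C A))));
    [| exact (conj (tbound_numeral _ _) (tbound_numeral _ _)) | exact hab | exact Ht].
  unfold refut at 1. rewrite Phi_T, !teval_numeral.
  assert (hag : ltR C a g) by (eapply (lt_trans C H); eauto).
  rewrite <- (refut_lower_level a) by (auto; apply idx_ok_realT, HAl).
  split.
  - intros [_ [_ [B [_ [_ [hc hr]]]]]]. apply (code_inj C H) in hc. subst B. exact hr.
  - intros hr. repeat split; auto. exists A. auto.
Qed.

Lemma sat_eq12 env : sat C H pole g env (eq12 C) <->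
  exists s t, tbound 0 s /\ tbound 0 t /\ tcode C s = env 1 /\ tcode C t = env 2 /\
    teval (fun _ => 0) s = teval (fun _ => 0) t.
Proof.
  unfold eq12. rewrite sat_fsubst, sat_isL, (eqf_ok C H) by apply (eqf_L C H).
  reflexivity.
Qed.

Lemma sat_rr1 env : is_pole C pole ->
  sat C H pole g env (fImp (frel (c_T1 C) [v 0; v 1; v 2])
    (fImp (fPole (tp0 C (v 2))) (fPole (tpair C (v 0) (v 1))))).
Proof.
  intros Hp. cbn [sat]. rewrite sat_frel. simpl. intros hT hp.
  apply (Hp (env 0) (env 1) (np0 C (env 2))); [exists (env 2)|]; auto.
Qed.

Lemma sat_rr2 b env : ltR C b g ->
  sat C H pole g env (fImp (frel (c_sent C) [numeral b; v 1])
    (fIff (fT b (v 0) (v 1))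
          (fAll (fImp (fF b (v 0) (v 2)) (fPole (tpair C (v 1) (v 0))))))).
Proof.
  intros hb. rewrite sat_Imp, sat_frel. cbn [map]. rewrite teval_numeral.
  intros hs. cbn [teval v] in hs.
  destruct (proj1 (sent_ok C H _ _) hs) as [A [HA [HAl HAc]]].
  assert (hF : forall n, sat C H pole g (scons n env) (fF b (v 0) (v 2)) <->
                        ltR C b g /\ refut C H pole g A n)
    by (intros n; apply sat_F_code; auto; symmetry; exact HAc).
  rewrite sat_Iff, (sat_T_code b _ _ A), sat_All by (try symmetry; assumption).
  setoid_rewrite sat_Imp. setoid_rewrite hF.
  unfold realiz. simpl. firstorder.
Qed.

Lemma sat_rr3 b env : ltR C b g ->
  sat C H pole g env (fImp (frel (c_sent1 C) [numeral b; v 3])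
    (fImp (eq12 C)
      (fImp (fF b (v 0) (tsub0 C (v 3) (v 1))) (fF b (v 0) (tsub0 C (v 3) (v 2)))))).
Proof.
  intros hb. rewrite !sat_Imp, sat_frel, sat_eq12. cbn [map]. rewrite teval_numeral.
  intros hs [s [t [Hs [Ht [Hsc [Htc Hst]]]]]]. cbn [teval v] in hs.
  destruct (proj1 (sent1_ok C H _ _) hs) as [A [HA [HAl HAc]]].
  assert (Hcode : forall u, tbound 0 u ->
            prf_eval (c_subst0 C) [env 3; tcode C u] = code C (subst0 A u)).
  { intros u Hu. rewrite <- HAc. apply (subst0_ok C H), Hu. }
  rewrite (sat_F_code b _ _ (subst0 A s)), (sat_F_code b _ _ (subst0 A t));
    try apply closed_subst0; try apply idx_ok_fsubst; auto.
  - rewrite !refut_subst0, Hst. tauto.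
  - simpl. rewrite <- Htc. auto.
  - simpl. rewrite <- Hsc. auto.
Qed.

Lemma sat_rr4 b P k env : ltR C b g -> atomic_Lpole P -> fbound k P ->
  sat C H pole g env (fIff (fF b (v k) (dotq C P k)) (fImp P (fPole (v k)))).
Proof.
  intros hb HP Hk. rewrite sat_Iff, sat_Imp.
  rewrite (sat_F_code b _ _ (subst_numerals env P 0 k)).
  - rewrite refut_subst_numerals_atomic by assumption. simpl. tauto.
  - apply closed_subst_numerals, Hk.
  - apply idx_ok_subst_numerals. destruct P; simpl in *; tauto.
  - apply (teval_dotq_aux C H). apply teval_numeral.
Qed.

Lemma sat_rr5 b env : ltR C b g ->
  sat C H pole g env (fImp (frel (c_sent C) [numeral b; v 1])
    (fImp (frel (c_sent C) [numeral b; v 2])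
      (fIff (fF b (v 0) (tapp (c_imp C) [v 1; v 2]))
            (fAnd (fT b (tp0 C (v 0)) (v 1)) (fF b (tp1 C (v 0)) (v 2)))))).
Proof.
  intros hb. rewrite !sat_Imp, !sat_frel. cbn [map]. rewrite teval_numeral.
  intros hs1 hs2. cbn [teval v] in hs1, hs2.
  destruct (proj1 (sent_ok C H _ _) hs1) as [A1 [HA1 [HA1l HA1c]]].
  destruct (proj1 (sent_ok C H _ _) hs2) as [A2 [HA2 [HA2l HA2c]]].
  rewrite sat_Iff, sat_And, (sat_F_code b _ _ (fImp A1 A2)), (sat_T_code b _ _ A1),
    (sat_F_code b _ _ A2), refut_Imp; try (try symmetry; assumption).
  - unfold np0, np1. simpl. tauto.
  - exact (conj HA1 HA2).
  - exact (conj HA1l HA2l).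
  - simpl. rewrite <- HA1c, <- HA2c. apply (imp_ok C H).
Qed.

Lemma sat_rr6 b env : ltR C b g ->
  sat C H pole g env (fImp (frel (c_sent1 C) [numeral b; v 1])
    (fIff (fF b (v 0) (tapp (c_all C) [v 1]))
          (fF b (tp1 C (v 0)) (tsub0 C (v 1) (tnum C (tp0 C (v 0))))))).
Proof.
  intros hb. rewrite sat_Imp, sat_frel. cbn [map]. rewrite teval_numeral.
  intros hs. cbn [teval v] in hs.
  destruct (proj1 (sent1_ok C H _ _) hs) as [A [HA [HAl HAc]]].
  rewrite sat_Iff, (sat_F_code b _ _ (fAll A)),
    (sat_F_code b _ _ (subst0 A (numeral (np0 C (env 0))))), refut_All.
  - unfold np0, np1. simpl. tauto.
  - apply closed_subst0; [exact HA | apply tbound_numeral].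
  - apply idx_ok_fsubst, HAl.
  - unfold np0. simpl. rewrite <- HAc, (num_ok C H).
    apply (subst0_ok C H), tbound_numeral.
  - exact HA.
  - exact HAl.
  - simpl. rewrite <- HAc. apply (all_ok C H).
Qed.

Lemma sat_rr7 a b env : ltR C a b -> ltR C b g ->
  sat C H pole g env (fImp (frel (c_sent C) [numeral a; v 2])
    (fIff (fF b (v 0) (tapp (c_mkF C) [numeral a; tnum C (v 1); tnum C (v 2)]))
          (realF C (v 0) (fF a (v 1) (v 2))))).
Proof.
  intros hab hbg. rewrite sat_Imp, sat_frel. cbn [map]. rewrite teval_numeral.
  intros hs. cbn [teval v] in hs.
  destruct (proj1 (sent_ok C H _ _) hs) as [A [HA [HAl HAc]]].
  assert (hag : ltR C a g) by (eapply (lt_trans C H); eauto).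
  unfold realF. simpl realF_s.
  rewrite sat_Iff, (sat_F_nestedF a b _ _ (env 1) A), (sat_F_realF a _ _ (env 1) A); auto.
  - reflexivity.
  - simpl. rewrite <- HAc. apply (inF_ok C H), HA.
  - simpl. rewrite teval_numeral, <- HAc, !(num_ok C H). apply (mkF_ok C H).
Qed.

Lemma sat_rr8 a b env : ltR C a b -> ltR C b g ->
  sat C H pole g env (fImp (frel (c_sent C) [numeral a; v 2])
    (fIff (fF b (v 0) (tapp (c_mkT C) [numeral a; tnum C (v 1); tnum C (v 2)]))
          (realF C (v 0) (fT a (v 1) (v 2))))).
Proof.
  intros hab hbg. rewrite sat_Imp, sat_frel. cbn [map]. rewrite teval_numeral.
  intros hs. cbn [teval v] in hs.
  destruct (proj1 (sent_ok C H _ _) hs) as [A [HA [HAl HAc]]].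
  assert (hag : ltR C a g) by (eapply (lt_trans C H); eauto).
  unfold realF. simpl realF_s.
  rewrite sat_Iff, (sat_F_nestedT a b _ _ (env 1) A), (sat_F_realT a _ _ (env 1) A); auto.
  - reflexivity.
  - simpl. rewrite <- HAc. apply (inT_ok C H), HA.
  - simpl. rewrite teval_numeral, <- HAc, !(num_ok C H). apply (mkT_ok C H).
Qed.

Lemma sat_rr9 b env : ltR C b g ->
  sat C H pole g env (fImp (frel (c_lt C) [v 3; numeral b])
    (fImp (frel (c_sent C) [v 3; v 2])
      (fIff (fF b (v 0) (tapp (c_mkF C) [v 3; tnum C (v 1); tnum C (v 2)]))
            (fF b (v 0) (tapp (c_inF C) [v 1; v 2]))))).
Proof.
  intros hbg. rewrite !sat_Imp, !sat_frel. cbn [map]. rewrite teval_numeral.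
  intros hab hs. cbn [teval v] in hab, hs. change (ltR C (env 3) b) in hab.
  destruct (proj1 (sent_ok C H _ _) hs) as [A [HA [HAl HAc]]].
  rewrite sat_Iff, (sat_F_nestedF (env 3) b _ _ (env 1) A), (sat_F_realF b _ _ (env 1) A);
    eauto using inLang_mono.
  - reflexivity.
  - simpl. rewrite <- HAc. apply (inF_ok C H), HA.
  - simpl. rewrite <- HAc, !(num_ok C H). apply (mkF_ok C H).
Qed.

Lemma sat_rr10 b env : ltR C b g ->
  sat C H pole g env (fImp (frel (c_lt C) [v 3; numeral b])
    (fImp (frel (c_sent C) [v 3; v 2])
      (fIff (fF b (v 0) (tapp (c_mkT C) [v 3; tnum C (v 1); tnum C (v 2)]))
            (fF b (v 0) (tapp (c_inT C) [v 1; v 2]))))).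
Proof.
  intros hbg. rewrite !sat_Imp, !sat_frel. cbn [map]. rewrite teval_numeral.
  intros hab hs. cbn [teval v] in hab, hs. change (ltR C (env 3) b) in hab.
  destruct (proj1 (sent_ok C H _ _) hs) as [A [HA [HAl HAc]]].
  rewrite sat_Iff, (sat_F_nestedT (env 3) b _ _ (env 1) A), (sat_F_realT b _ _ (env 1) A);
    eauto using inLang_mono.
  - reflexivity.
  - simpl. rewrite <- HAc. apply (inT_ok C H), HA.
  - simpl. rewrite <- HAc, !(num_ok C H). apply (mkT_ok C H).
Qed.

Lemma RRAx_sound A : is_pole C pole -> RRAx C g A -> forall env, sat C H pole g env A.
Proof.
  intros Hp HA env. destruct HA.
  - apply sat_rr1, Hp.
  - apply sat_rr2; assumption.
  - apply sat_rr3; assumption.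
  - apply sat_rr4; assumption.
  - apply sat_rr5; assumption.
  - apply sat_rr6; assumption.
  - apply sat_rr7; assumption.
  - apply sat_rr8; assumption.
  - apply sat_rr9; assumption.
  - apply sat_rr10; assumption.
Qed.

End RRAxioms.

Lemma is_pole_empty C : is_pole C (fun _ => False).
Proof. intros e m n _ []. Qed.

Lemma realiz_empty_pole_tsat C H g A n :
  isL A -> realiz C H (fun _ => False) g A n -> tsat (fun _ => 0) A.
Proof.
  intros HL hr. apply NNPP. intros hA.
  apply (Phi_empty_pole_iff_false C H g A HL) in hA. destruct hA as [m hm]. exact (hr m hm).
Qed.

Theorem Prov_sound C (H : CodesOK C) g A : Prov C g A ->
  forall pole, is_pole C pole -> forall env, sat C H pole g env A.
Proof.
  induction 1 as [A HA _|A B _ IHAB _ IHA|A _ IH|b t A _ _ HA HL _ IH];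
    intros pole Hp env.
  - destruct HA as [HA|[HA|HA]];
      [apply LogAx_sound | apply PAAx_sound | apply RRAx_sound]; assumption.
  - exact (IHAB pole Hp env (IHA pole Hp env)).
  - intros n. apply IH, Hp.
  - destruct (IH _ (is_pole_empty C) (fun _ => 0)) as [_ [B [_ [_ [hc hr]]]]].
    rewrite teval_numeral in hc. apply (code_inj C H) in hc. subst B.
    apply (sat_isL C H pole g A HL), (tsat_ext_bound A 0 (fun _ => 0)); [exact HA | lia |].
    exact (realiz_empty_pole_tsat C H g A _ HL hr).
Qed.

Theorem proposition6 (C : Codes) (H : CodesOK C) (g : nat) (A : form) :
  inOT C g ->
  closed A -> inLang C g A ->
  Prov C g A ->
  forall pole : nat -> Prop, is_pole C pole ->
    forall env : nat -> nat, sat C H pole g env A.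
Proof.
  intros _ _ _ HA. exact (Prov_sound C H g A HA).
Qed.
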